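(* Let $B$ be a non-abelian group, $H$ a finitely generated infinite group with fixed finite generating set $X=\{x_1,\dots,x_n\}$, $W=B\wr H$, and fix $a,b\in B$ with $ab\ne ba$. For $S\subseteq H$ define $\bar a,\bar b_S\in B^H$ by $\bar a(1)=a$, $\bar a(x)=1$ for $x\neq1$, and $\bar b_S(x)=b$ for $x\in S$, $\bar b_S(x)=1$ for $x\notin S$; let $G_S\le W$ be the subgroup generated by $H$, $\bar a$, $\bar b_S$, and $Y_S=(x_1,\dots,x_n,\bar a,\bar b_S)$. Then the map $\xi:2^H\to\mathcal G$, $\xi(S)=(G_S,Y_S)$, is injective.
   Context: $B^H$ is the group of all functions $H\to B$ with pointwise multiplication; $B\wr H=B^H\rtimes H$ with $(hfh^{-1})(x)=f(h^{-1}x)$. $2^H$ is the set of subsets of $H$. $\mathcal G$ is the space of finitely generated marked groups: pairs $(G,A)$ with $A$ a finite ordered generating tuple of $G$, where $(G,(a_1,\dots,a_m))\approx(G',(a'_1,\dots,a'_m))$ are identified iff $a_i\mapsto a'_i$ extends to an isomorphism (and a tuple is identified with itself extended by the identity element). *)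

From Stdlib Require Import List ClassicalDescription.
Import ListNotations.

Record Group := {
  gcar :> Type;
  gmul : gcar -> gcar -> gcar;
  gone : gcar;
  ginv : gcar -> gcar;
  gmulA : forall x y z, gmul x (gmul y z) = gmul (gmul x y) z;
  gmul1l : forall x, gmul gone x = x;
  gmulVl : forall x, gmul (ginv x) x = gone }.
Arguments gmul {g}.
Arguments gone {g}.
Arguments ginv {g}.

Inductive gen {T : Type} (mul : T -> T -> T) (inv : T -> T) (one : T)
    (A : T -> Prop) : T -> Prop :=
  | gen_base x : A x -> gen mul inv one A x
  | gen_one : gen mul inv one A one
  | gen_mul x y : gen mul inv one A x -> gen mul inv one A y ->
                  gen mul inv one A (mul x y)
  | gen_inv x : gen mul inv one A x -> gen mul inv one A (inv x).

(* Wreath product W = B wr H = B^H x| H, elements (f, h).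
   (f,h)(g,k) = (f * (h.g), hk) where (h.g)(x) = g(h^-1 x). *)
Definition wr (B H : Group) : Type := ((H -> B) * H)%type.

Definition wmul {B H : Group} (u v : wr B H) : wr B H :=
  (fun x => gmul (fst u x) (fst v (gmul (ginv (snd u)) x)), gmul (snd u) (snd v)).

Definition wone {B H : Group} : wr B H := (fun _ => gone, gone).

Definition winv {B H : Group} (u : wr B H) : wr B H :=
  (fun x => ginv (fst u (gmul (snd u) x)), ginv (snd u)).

Definition wgen {B H : Group} (A : wr B H -> Prop) : wr B H -> Prop :=
  gen wmul winv wone A.

Definition hemb {B H : Group} (h : H) : wr B H := (fun _ => gone, h).

Definition abar {B H : Group} (a : B) : wr B H :=
  (fun x => if excluded_middle_informative (x = gone) then a else gone, gone).

Definition bbar {B H : Group} (b : B) (S : H -> Prop) : wr B H :=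
  (fun x => if excluded_middle_informative (S x) then b else gone, gone).

Definition GS {B H : Group} (a b : B) (S : H -> Prop) : wr B H -> Prop :=
  wgen (fun w => (exists h : H, w = hemb h) \/ w = abar a \/ w = bbar b S).

Definition YS {B H : Group} (X : list H) (a b : B) (S : H -> Prop)
  : list (wr B H) := map hemb X ++ [abar a; bbar b S].

(* Equality in the space of marked groups of (G, Y) and (G', Y') (subgroups of
   a common ambient group with operations mul, inv, one, tuples of equal
   length): the assignment Y_i |-> Y'_i extends to an isomorphism G -> G'. *)
Definition marked_equiv {T : Type} (mul : T -> T -> T)
    (G : T -> Prop) (Y : list T) (G' : T -> Prop) (Y' : list T) : Prop :=
  exists phi : T -> T,
    Forall2 (fun y y' => phi y = y') Y Y' /\
    (forall u, G u -> G' (phi u)) /\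
    (forall u v, G u -> G v -> phi (mul u v) = mul (phi u) (phi v)) /\
    (forall u v, G u -> G v -> phi u = phi v -> u = v) /\
    (forall v, G' v -> exists u, G u /\ phi u = v).

(* An isomorphism of marked groups (G_S, Y_S) -> (G_T, Y_T) fixes the
   generators x_i, hence fixes the copy of H pointwise; it therefore fixes a
   and maps the conjugate c_S(g) = g^-1 b_S g to c_T(g).  Both a and c_S(g) lie
   in the base B^H, a is supported at 1 and c_S(g)(1) is b if g is in S and 1
   otherwise, so a commutes with c_S(g) exactly when g is not in S.  An
   isomorphism preserves commutation in both directions, whence S = T. *)

From Stdlib Require Import List.
From Stdlib Require Import Classical ClassicalDescription FunctionalExtensionality PropExtensionality.

Section GroupFacts.
Variable G : Group.

Lemma gmul_idem_one (y : G) : gmul y y = y -> y = gone.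
Proof.
  intro E. rewrite <- (gmul1l _ y), <- (gmulVl _ y) at 1.
  rewrite <- gmulA, E. apply gmulVl.
Qed.

Lemma gmulVr (x : G) : gmul x (ginv x) = gone.
Proof.
  apply gmul_idem_one.
  rewrite gmulA, <- (gmulA _ x (ginv x) x), gmulVl, <- gmulA, gmul1l.
  reflexivity.
Qed.

Lemma gmul1r (x : G) : gmul x gone = x.
Proof. rewrite <- (gmulVl _ x), gmulA, gmulVr, gmul1l. reflexivity. Qed.

Lemma ginv1 : ginv (gone : G) = gone.
Proof. rewrite <- (gmul1r (ginv gone)). apply gmulVl. Qed.

Lemma ginv_unique (s x : G) : gmul s x = gone -> s = ginv x.
Proof.
  intro E. rewrite <- (gmul1r s), <- (gmulVr x), gmulA, E, gmul1l.
  reflexivity.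
Qed.

Lemma ginvK (x : G) : ginv (ginv x) = x.
Proof. symmetry. apply ginv_unique, gmulVr. Qed.

End GroupFacts.

Lemma Forall2_app_same_prefix {A : Type} (R : A -> A -> Prop) (l m m' : list A) :
  Forall2 R (l ++ m) (l ++ m') -> (forall x, In x l -> R x x) /\ Forall2 R m m'.
Proof.
  induction l as [|x l IH]; simpl; intro F.
  - split; [intros _ []|exact F].
  - inversion F as [|? ? ? ? Rxx F']; subst.
    destruct (IH F') as [Hl Hm]. split; [|exact Hm].
    intros y [<-|Hy]; auto.
Qed.

Section MulPreserving.
Variables (T : Type) (mul : T -> T -> T) (G : T -> Prop) (phi : T -> T).
Hypothesis G_mul : forall u v, G u -> G v -> G (mul u v).
Hypothesis phi_mul : forall u v, G u -> G v -> phi (mul u v) = mul (phi u) (phi v).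
Hypothesis phi_inj : forall u v, G u -> G v -> phi u = phi v -> u = v.

Lemma commute_image_iff u v : G u -> G v ->
  mul u v = mul v u <-> mul (phi u) (phi v) = mul (phi v) (phi u).
Proof.
  intros Gu Gv. rewrite <- !phi_mul by assumption. split.
  - intros ->. reflexivity.
  - apply phi_inj; auto.
Qed.

End MulPreserving.

Section Wreath.
Variables B H : Group.

Lemma hemb_mul (x y : H) : @hemb B H (gmul x y) = wmul (hemb x) (hemb y).
Proof.
  unfold hemb, wmul; simpl. f_equal.
  apply functional_extensionality; intros. rewrite gmul1l. reflexivity.
Qed.

Lemma wmul_idem_one (u : wr B H) : wmul u u = u -> u = wone.
Proof.
  destruct u as [f s]. unfold wmul, wone; simpl. intro E. injection E as Ef Es.
  apply gmul_idem_one in Es. subst s. f_equal.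
  apply functional_extensionality; intro x.
  apply (f_equal (fun F => F x)) in Ef. simpl in Ef.
  rewrite ginv1, gmul1l in Ef. apply gmul_idem_one, Ef.
Qed.

Lemma wmul_hemb_eq_one (v : wr B H) (x : H) :
  wmul v (hemb x) = wone -> v = hemb (ginv x).
Proof.
  destruct v as [f s]. unfold wmul, wone, hemb; simpl. intro E. injection E as Ef Es.
  f_equal.
  - apply functional_extensionality; intro y.
    apply (f_equal (fun F => F y)) in Ef. simpl in Ef. rewrite gmul1r in Ef. exact Ef.
  - apply ginv_unique, Es.
Qed.

Lemma wmul_comm_base (u v : wr B H) : snd u = gone -> snd v = gone ->
  wmul u v = wmul v u <->
  forall x, gmul (fst u x) (fst v x) = gmul (fst v x) (fst u x).
Proof.
  destruct u as [f s], v as [k t]; simpl; intros -> ->.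
  unfold wmul; simpl. rewrite ginv1. split.
  - intros E x. apply (f_equal (fun p => fst p x)) in E; simpl in E.
    rewrite !gmul1l in E. exact E.
  - intros E. f_equal. apply functional_extensionality; intros x.
    rewrite !gmul1l. apply E.
Qed.

Definition conj_bbar (b : B) (S : H -> Prop) (g : H) : wr B H :=
  wmul (wmul (hemb (ginv g)) (bbar b S)) (hemb g).

Lemma conj_bbar_snd b S g : snd (conj_bbar b S g) = gone.
Proof. unfold conj_bbar, wmul, hemb, bbar; simpl. rewrite gmul1r. apply gmulVl. Qed.

Lemma conj_bbar_fst1 b S g : fst (conj_bbar b S g) gone =
  if excluded_middle_informative (S g) then b else gone.
Proof.
  unfold conj_bbar, wmul, hemb, bbar; simpl.
  rewrite gmul1r, gmul1r, gmul1l, ginvK. reflexivity.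
Qed.

Lemma abar_comm_conj_bbar (a b : B) S g : gmul a b <> gmul b a ->
  wmul (abar a) (conj_bbar b S g) = wmul (conj_bbar b S g) (abar a) <-> ~ S g.
Proof.
  intro hab.
  rewrite wmul_comm_base; [| reflexivity | apply conj_bbar_snd]. split.
  - intros E Sg. specialize (E gone). rewrite conj_bbar_fst1 in E. simpl in E.
    destruct (excluded_middle_informative (S g)); [|contradiction].
    destruct (excluded_middle_informative (@gone H = gone)); [|congruence].
    apply hab, E.
  - intros nSg x. unfold abar; cbn [fst].
    destruct (excluded_middle_informative (x = gone)) as [->|].
    + rewrite conj_bbar_fst1.
      destruct (excluded_middle_informative (S g)); [contradiction|].
      rewrite gmul1r, gmul1l. reflexivity.
    + rewrite gmul1r, gmul1l. reflexivity.
Qed.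

Section Generated.
Variables (a b : B) (S : H -> Prop).

Lemma GS_hemb h : GS a b S (hemb h).
Proof. apply gen_base. left. exists h. reflexivity. Qed.

Lemma GS_abar : GS a b S (abar a).
Proof. apply gen_base. right; left; reflexivity. Qed.

Lemma GS_bbar : GS a b S (bbar b S).
Proof. apply gen_base. right; right; reflexivity. Qed.

Lemma GS_mul u v : GS a b S u -> GS a b S v -> GS a b S (wmul u v).
Proof. apply gen_mul. Qed.

Lemma GS_conj_bbar g : GS a b S (conj_bbar b S g).
Proof. apply GS_mul; [apply GS_mul|]; auto using GS_hemb, GS_bbar. Qed.

Variables (X : list H) (phi : wr B H -> wr B H).
Hypothesis hX : forall h : H, gen gmul ginv gone (fun y => In y X) h.
Hypothesis phi_mul : forall u v, GS a b S u -> GS a b S v ->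
  phi (wmul u v) = wmul (phi u) (phi v).
Hypothesis phi_X : forall x, In x X -> phi (hemb x) = hemb x.

Lemma phi_wone : phi wone = wone.
Proof.
  apply wmul_idem_one. change (@wone B H) with (@hemb B H gone).
  rewrite <- phi_mul by apply GS_hemb.
  rewrite <- hemb_mul, gmul1l. reflexivity.
Qed.

Lemma phi_hemb h : phi (hemb h) = hemb h.
Proof.
  induction (hX h) as [x Hx| | x y _ IHx _ IHy | x _ IHx].
  - auto.
  - exact phi_wone.
  - rewrite hemb_mul, phi_mul by apply GS_hemb. rewrite IHx, IHy. reflexivity.
  - apply wmul_hemb_eq_one. rewrite <- IHx, <- phi_mul by apply GS_hemb.
    rewrite <- hemb_mul, gmulVl. exact phi_wone.
Qed.

Lemma phi_conj_bbar (T : H -> Prop) g :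
  phi (bbar b S) = bbar b T -> phi (conj_bbar b S g) = conj_bbar b T g.
Proof.
  intro Eb. unfold conj_bbar.
  rewrite !phi_mul by auto using GS_mul, GS_hemb, GS_bbar.
  rewrite !phi_hemb, Eb. reflexivity.
Qed.

End Generated.

End Wreath.

Theorem lemma3p4 (B H : Group) (X : list H) (a b : B)
  (hab : gmul a b <> gmul b a)
  (hX : forall h : H, gen gmul ginv gone (fun y => In y X) h)
  (hinf : ~ (exists l : list H, forall h : H, In h l)) :
  forall S T : H -> Prop,
    marked_equiv wmul (GS a b S) (YS X a b S) (GS a b T) (YS X a b T) ->
    S = T.
Proof.
  intros S T [phi [F [_ [phi_mul [phi_inj _]]]]].
  apply Forall2_app_same_prefix in F as [F_prefix F].
  inversion F as [|? ? ? ? Ea F']; subst. inversion F' as [|? ? ? ? Eb _]; subst.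
  assert (phi_X : forall x, In x X -> phi (hemb x) = hemb x)
    by (intros x Hx; apply F_prefix, in_map, Hx).
  apply functional_extensionality; intro g. apply propositional_extensionality.
  assert (Hcomm : ~ S g <-> ~ T g).
  { rewrite <- !(abar_comm_conj_bbar B H a b _ g hab).
    rewrite (commute_image_iff _ _ _ phi (GS_mul B H a b S) phi_mul phi_inj)
      by auto using GS_abar, GS_conj_bbar.
    rewrite Ea, (phi_conj_bbar B H a b S X phi hX phi_mul phi_X T g Eb).
    reflexivity. }
  split; intro Hg; apply NNPP; intro Hn; apply Hcomm in Hn; contradiction.
Qed.
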